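(* Let $\Gamma>1$ and let $(\rho_L,u_L,v_L,p_L)$, $(\rho_R,u_R,v_R,p_R)$ be two states with $\rho_{L},\rho_R,p_L,p_R>0$ and $u_L^2+v_L^2<1$, $u_R^2+v_R^2<1$. Set $W=1/\sqrt{1-u^2-v^2}$ at each state and $z_1=\rho$, $z_2=\rho/p$, $z_3=u$, $z_4=v$. Write $L_x=\mathcal L_x(z_3,z_4)$, $L_y=\mathcal L_y(z_3,z_4)$, $\alpha=1+\frac{1}{(\Gamma-1)\{\!\{z_2\}\!\}^{\ln}}$ and \[ Q=\{\!\{z_2\}\!\}\{\!\{W\}\!\}^2+\{\!\{z_2\}\!\}\big(\{\!\{z_3\}\!\}\{\!\{W\}\!\}L_x-\{\!\{uW\}\!\}L_x+\{\!\{z_4\}\!\}\{\!\{W\}\!\}L_y-\{\!\{vW\}\!\}L_y\big). \] Define the $x$-directional flux $\tilde{\mathbf F}=(\tilde F_1,\tilde F_2,\tilde F_3,\tilde F_4)^T$ by \[ \tilde F_1=\{\!\{z_1\}\!\}^{\ln}\{\!\{uW\}\!\}, \] \[ \tilde F_2=Q^{-1}\Big\{\alpha\{\!\{z_2\}\!\}L_x\tilde F_1+\{\!\{z_1\}\!\}\big(\{\!\{W\}\!\}^2-\{\!\{vW\}\!\}L_y\big)+\{\!\{z_1\}\!\}\{\!\{W\}\!\}\big(\{\!\{z_3\}\!\}L_x+\{\!\{z_4\}\!\}L_y\big)\Big\}, \] \[ \tilde F_3=Q^{-1}\Big\{\alpha\{\!\{z_2\}\!\}L_y\tilde F_1+\{\!\{z_1\}\!\}\{\!\{uW\}\!\}L_y\Big\},\qquad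 \tilde F_4=\{\!\{W\}\!\}^{-1}\big(\alpha\tilde F_1+\{\!\{uW\}\!\}\tilde F_2+\{\!\{vW\}\!\}\tilde F_3\big), \] and the $y$-directional flux $\tilde{\mathbf G}=(\tilde G_1,\tilde G_2,\tilde G_3,\tilde G_4)^T$ by \[ \tilde G_1=\{\!\{z_1\}\!\}^{\ln}\{\!\{vW\}\!\},\qquad \tilde G_2=Q^{-1}\Big\{\alpha\{\!\{z_2\}\!\}L_x\tilde G_1+\{\!\{z_1\}\!\}\{\!\{vW\}\!\}L_x\Big\}, \] \[ \tilde G_3=Q^{-1}\Big\{\alpha\{\!\{z_2\}\!\}L_y\tilde G_1+\{\!\{z_1\}\!\}\big(\{\!\{W\}\!\}^2-\{\!\{uW\}\!\}L_x\big)+\{\!\{z_1\}\!\}\{\!\{W\}\!\}\big(\{\!\{z_3\}\!\}L_x+\{\!\{z_4\}\!\}L_y\big)\Big\}, \] \[ \tilde G_4=\{\!\{W\}\!\}^{-1}\big(\alpha\tilde G_1+\{\!\{uW\}\!\}\tilde G_2+\{\!\{vW\}\!\}\tilde G_3\big). \] Then $Q=\{\!\{z_2\}\!\}W_LW_R>0$, so both fluxes are well defined, and they satisfy the entropy conservation conditions \[ [\![\mathbf V]\!]^T\tilde{\mathbf F}=[\![\psi_x]\!],\qquad [\![\mathbf V]\!]^T\tilde{\mathbf G}=[\![\psi_y]\!]. \] Moreover both fluxes are consistent: if the left and right states coincide, then $\tilde{\mathbf F}=\mathbf F(\mathbf U)$ and $\tilde{\mathbf G}=\mathbf G(\mathbf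 U)$ at that state.
   Context: Two-dimensional special relativistic hydrodynamics (speed of light $1$) with ideal equation of state $p=(\Gamma-1)\rho e$: $\mathbf U=(D,m_x,m_y,E)^T$ with $D=\rho W$, $(m_x,m_y)=\rho hW^2(u,v)$, $E=\rho hW^2-p$, $W=1/\sqrt{1-u^2-v^2}$, $h=1+\Gamma p/((\Gamma-1)\rho)$; fluxes $\mathbf F=(Du,\,m_xu+p,\,m_yu,\,m_x)^T$, $\mathbf G=(Dv,\,m_xv,\,m_yv+p,\,m_y)^T$. With $S=\ln p-\Gamma\ln\rho$, the entropy variables are $\mathbf V=\big(\frac{\Gamma-S}{\Gamma-1}+\frac{\rho}{p},\ \frac{\rho Wu}{p},\ \frac{\rho Wv}{p},\ -\frac{\rho W}{p}\big)^T$ and the potentials are $\psi_x=\rho Wu$, $\psi_y=\rho Wv$ (corresponding to the entropy $\eta=-\rho WS/(\Gamma-1)$ with fluxes $q_x=-\rho uWS/(\Gamma-1)$, $q_y=-\rho vWS/(\Gamma-1)$). For a quantity $a$ with values $a_L,a_R$: $[\![a]\!]=a_R-a_L$, $\{\!\{a\}\!\}=(a_L+a_R)/2$ (e.g. $\{\!\{uW\}\!\}=(u_LW_L+u_RW_R)/2$), and for positive $a$ the logarithmic mean $\{\!\{a\}\!\}^{\ln}=[\![a]\!]/[\![\ln a]\!]$ if $a_L\ne a_R$, $=a_L$ if $a_L=a_R$. The Lorentz means are $\mathcal L_x(u,v)=\dfrac{u_L+u_R}{\sqrt{1-u_L^2-v_L^2}\sqrt{1-u_R^2-v_R^2}\big(\sqrt{1-u_L^2-v_L^2}+\sqrt{1-u_R^2-v_R^2}\big)}$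 and $\mathcal L_y(u,v)$ the same with numerator $v_L+v_R$; they satisfy $[\![W]\!]=\mathcal L_x[\![u]\!]+\mathcal L_y[\![v]\!]$. *)

From Stdlib Require Import Reals.
Open Scope R_scope.

Record state := mkState { rho : R; vx : R; vy : R; pr : R }.

Definition admissible (s : state) : Prop :=
  0 < rho s /\ 0 < pr s /\ vx s ^ 2 + vy s ^ 2 < 1.

Definition lorentz (s : state) : R := 1 / sqrt (1 - vx s ^ 2 - vy s ^ 2).

Definition avg (aL aR : R) : R := (aL + aR) / 2.
Definition jump (aL aR : R) : R := aR - aL.
Definition logmean (aL aR : R) : R :=
  if Req_EM_T aL aR then aL else (aR - aL) / (ln aR - ln aL).

Definition z1 (s : state) : R := rho s.
Definition z2 (s : state) : R := rho s / pr s.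
Definition z3 (s : state) : R := vx s.
Definition z4 (s : state) : R := vy s.

Definition Lx (sL sR : state) : R :=
  (vx sL + vx sR) /
  (sqrt (1 - vx sL ^ 2 - vy sL ^ 2) * sqrt (1 - vx sR ^ 2 - vy sR ^ 2) *
   (sqrt (1 - vx sL ^ 2 - vy sL ^ 2) + sqrt (1 - vx sR ^ 2 - vy sR ^ 2))).
Definition Ly (sL sR : state) : R :=
  (vy sL + vy sR) /
  (sqrt (1 - vx sL ^ 2 - vy sL ^ 2) * sqrt (1 - vx sR ^ 2 - vy sR ^ 2) *
   (sqrt (1 - vx sL ^ 2 - vy sL ^ 2) + sqrt (1 - vx sR ^ 2 - vy sR ^ 2))).

Definition avgW (sL sR : state) : R := avg (lorentz sL) (lorentz sR).
Definition avguW (sL sR : state) : R := avg (vx sL * lorentz sL) (vx sR * lorentz sR).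
Definition avgvW (sL sR : state) : R := avg (vy sL * lorentz sL) (vy sR * lorentz sR).
Definition avgz1 (sL sR : state) : R := avg (z1 sL) (z1 sR).
Definition avgz2 (sL sR : state) : R := avg (z2 sL) (z2 sR).
Definition avgz3 (sL sR : state) : R := avg (z3 sL) (z3 sR).
Definition avgz4 (sL sR : state) : R := avg (z4 sL) (z4 sR).

Definition alpha (G : R) (sL sR : state) : R :=
  1 + 1 / ((G - 1) * logmean (z2 sL) (z2 sR)).

Definition Qden (sL sR : state) : R :=
  avgz2 sL sR * avgW sL sR ^ 2 +
  avgz2 sL sR * (avgz3 sL sR * avgW sL sR * Lx sL sR - avguW sL sR * Lx sL sR
                 + avgz4 sL sR * avgW sL sR * Ly sL sR - avgvW sL sR * Ly sL sR).

Definition vec4 := (R * R * R * R)%type.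

Definition dot4 (a b : vec4) : R :=
  let '(a1, a2, a3, a4) := a in let '(b1, b2, b3, b4) := b in
  a1 * b1 + a2 * b2 + a3 * b3 + a4 * b4.

Definition jump4 (a b : vec4) : vec4 :=
  let '(a1, a2, a3, a4) := a in let '(b1, b2, b3, b4) := b in
  (b1 - a1, b2 - a2, b3 - a3, b4 - a4).

Definition Ftilde (G : R) (sL sR : state) : vec4 :=
  let Q := Qden sL sR in
  let a := alpha G sL sR in
  let F1 := logmean (z1 sL) (z1 sR) * avguW sL sR in
  let F2 := / Q * (a * avgz2 sL sR * Lx sL sR * F1
              + avgz1 sL sR * (avgW sL sR ^ 2 - avgvW sL sR * Ly sL sR)
              + avgz1 sL sR * avgW sL sR * (avgz3 sL sR * Lx sL sR + avgz4 sL sR * Ly sL sR)) in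
  let F3 := / Q * (a * avgz2 sL sR * Ly sL sR * F1
              + avgz1 sL sR * avguW sL sR * Ly sL sR) in
  let F4 := / avgW sL sR * (a * F1 + avguW sL sR * F2 + avgvW sL sR * F3) in
  (F1, F2, F3, F4).

Definition Gtilde (G : R) (sL sR : state) : vec4 :=
  let Q := Qden sL sR in
  let a := alpha G sL sR in
  let G1 := logmean (z1 sL) (z1 sR) * avgvW sL sR in
  let G2 := / Q * (a * avgz2 sL sR * Lx sL sR * G1
              + avgz1 sL sR * avgvW sL sR * Lx sL sR) in
  let G3 := / Q * (a * avgz2 sL sR * Ly sL sR * G1
              + avgz1 sL sR * (avgW sL sR ^ 2 - avguW sL sR * Lx sL sR)
              + avgz1 sL sR * avgW sL sR * (avgz3 sL sR * Lx sL sR + avgz4 sL sR * Ly sL sR)) in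
  let G4 := / avgW sL sR * (a * G1 + avguW sL sR * G2 + avgvW sL sR * G3) in
  (G1, G2, G3, G4).

Definition enthalpy (G : R) (s : state) : R := 1 + G * pr s / ((G - 1) * rho s).
Definition specS (G : R) (s : state) : R := ln (pr s) - G * ln (rho s).

Definition entV (G : R) (s : state) : vec4 :=
  ((G - specS G s) / (G - 1) + rho s / pr s,
   rho s * lorentz s * vx s / pr s,
   rho s * lorentz s * vy s / pr s,
   - (rho s * lorentz s / pr s)).

Definition psix (s : state) : R := rho s * lorentz s * vx s.
Definition psiy (s : state) : R := rho s * lorentz s * vy s.

Definition consD (s : state) : R := rho s * lorentz s.
Definition consMx (G : R) (s : state) : R := rho s * enthalpy G s * lorentz s ^ 2 * vx s.
Definition consMy (G : R) (s : state) : R := rho s * enthalpy G s * lorentz s ^ 2 * vy s.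
Definition consE (G : R) (s : state) : R := rho s * enthalpy G s * lorentz s ^ 2 - pr s.

Definition physF (G : R) (s : state) : vec4 :=
  (consD s * vx s, consMx G s * vx s + pr s, consMy G s * vx s, consMx G s).
Definition physG (G : R) (s : state) : vec4 :=
  (consD s * vy s, consMx G s * vy s, consMy G s * vy s + pr s, consMy G s).

From Stdlib Require Import Reals Lra.
Open Scope R_scope.

(* Two facts carry all the non-algebraic content: the logarithmic mean turns
   [[ln a]] into [[a]], and the Lorentz means make [[W]] linear in [[u]] and
   [[v]], so that W_R can be eliminated in favour of W_L.  Expanding the jumps
   of the entropy variables by the discrete product rule, the terms carrying
   [[rho/p]] add up to a multiple of the relation defining the fourth flux
   component and vanish; what remains is a rational identity.  Exchanging u
   and v turns the x-flux into the y-flux, which transfers both entropy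
   conservation and consistency to the y-direction. *)

Lemma ln_div x y : 0 < x -> 0 < y -> ln (x / y) = ln x - ln y.
Proof.
  intros Hx Hy; unfold Rdiv.
  rewrite ln_mult, ln_Rinv by (try apply Rinv_0_lt_compat; assumption); ring.
Qed.

Lemma logmean_diag a : logmean a a = a.
Proof. unfold logmean; destruct (Req_EM_T a a); [reflexivity | congruence]. Qed.

Lemma logmean_pos a b : 0 < a -> 0 < b -> 0 < logmean a b.
Proof.
  intros Ha Hb; unfold logmean; destruct (Req_EM_T a b) as [_ | Hab]; [exact Ha |].
  destruct (Rlt_or_le a b) as [Hlt | Hle].
  - apply Rdiv_lt_0_compat; [lra |].
    assert (ln a < ln b) by (apply ln_increasing; lra); lra.
  - assert (ln b < ln a) by (apply ln_increasing; lra).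
    replace ((b - a) / (ln b - ln a)) with ((a - b) / (ln a - ln b)) by (field; lra).
    apply Rdiv_lt_0_compat; lra.
Qed.

Lemma logmean_mul_ln_jump a b : 0 < a -> 0 < b -> logmean a b * (ln b - ln a) = b - a.
Proof.
  intros Ha Hb; unfold logmean; destruct (Req_EM_T a b) as [-> | Hab]; [ring |].
  assert (ln b - ln a <> 0) by (intro E; apply Hab, ln_inv; lra).
  field; assumption.
Qed.

Lemma logmean_ln_jump_mul a b X : 0 < a -> 0 < b ->
  jump (ln a) (ln b) * (logmean a b * X) = jump a b * X.
Proof. intros Ha Hb; unfold jump; rewrite <- (logmean_mul_ln_jump a b Ha Hb); ring. Qed.

Lemma lorentz_sqrt_pos s : admissible s -> 0 < sqrt (1 - vx s ^ 2 - vy s ^ 2).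
Proof. intros (_ & _ & Hv); apply sqrt_lt_R0; lra. Qed.

Lemma lorentz_pos s : admissible s -> 0 < lorentz s.
Proof.
  intros Hs; unfold lorentz, Rdiv; rewrite Rmult_1_l.
  apply Rinv_0_lt_compat, lorentz_sqrt_pos, Hs.
Qed.

Lemma lorentz_jump sL sR : admissible sL -> admissible sR ->
  jump (lorentz sL) (lorentz sR)
  = Lx sL sR * jump (vx sL) (vx sR) + Ly sL sR * jump (vy sL) (vy sR).
Proof.
  intros HL HR.
  pose proof (lorentz_sqrt_pos _ HL) as Ha; pose proof (lorentz_sqrt_pos _ HR) as Hb.
  assert (Ea : sqrt (1 - vx sL ^ 2 - vy sL ^ 2) ^ 2 = 1 - vx sL ^ 2 - vy sL ^ 2)
    by (apply pow2_sqrt; destruct HL as (_ & _ & ?); lra).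
  assert (Eb : sqrt (1 - vx sR ^ 2 - vy sR ^ 2) ^ 2 = 1 - vx sR ^ 2 - vy sR ^ 2)
    by (apply pow2_sqrt; destruct HR as (_ & _ & ?); lra).
  unfold jump, lorentz, Lx, Ly.
  set (a := sqrt (1 - vx sL ^ 2 - vy sL ^ 2)) in *.
  set (b := sqrt (1 - vx sR ^ 2 - vy sR ^ 2)) in *.
  transitivity ((a ^ 2 - b ^ 2) / (a * b * (a + b))); [field; lra |].
  rewrite Ea, Eb; field; lra.
Qed.

Lemma Qden_eq sL sR : admissible sL -> admissible sR ->
  Qden sL sR = avgz2 sL sR * lorentz sL * lorentz sR.
Proof.
  intros HL HR; pose proof (lorentz_jump _ _ HL HR) as HW; unfold jump in HW.
  unfold Qden, avgz3, avgz4, avgW, avguW, avgvW, avg, z3, z4.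
  replace (lorentz sR) with (lorentz sL + Lx sL sR * (vx sR - vx sL) + Ly sL sR * (vy sR - vy sL))
    by lra.
  field.
Qed.

Lemma z2_pos s : admissible s -> 0 < z2 s.
Proof. intros (Hr & Hp & _); apply Rdiv_lt_0_compat; assumption. Qed.

Lemma Qden_pos sL sR : admissible sL -> admissible sR -> 0 < Qden sL sR.
Proof.
  intros HL HR; rewrite Qden_eq by assumption.
  pose proof (z2_pos _ HL); pose proof (z2_pos _ HR).
  pose proof (lorentz_pos _ HL); pose proof (lorentz_pos _ HR).
  assert (0 < avgz2 sL sR) by (unfold avgz2, avg; lra).
  apply Rmult_lt_0_compat; [apply Rmult_lt_0_compat |]; assumption.
Qed.

Lemma avgW_pos sL sR : admissible sL -> admissible sR -> 0 < avgW sL sR.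
Proof.
  intros HL HR; pose proof (lorentz_pos _ HL); pose proof (lorentz_pos _ HR).
  unfold avgW, avg; lra.
Qed.

Lemma entV1_jump G sL sR : 1 < G -> admissible sL -> admissible sR ->
  jump ((G - specS G sL) / (G - 1) + rho sL / pr sL) ((G - specS G sR) / (G - 1) + rho sR / pr sR)
  = jump (ln (rho sL)) (ln (rho sR)) + alpha G sL sR * jump (z2 sL) (z2 sR).
Proof.
  intros HG HL HR.
  pose proof (logmean_pos _ _ (z2_pos _ HL) (z2_pos _ HR)).
  assert (Halpha : alpha G sL sR * jump (z2 sL) (z2 sR)
                   = jump (z2 sL) (z2 sR) + (ln (z2 sR) - ln (z2 sL)) / (G - 1)).
  { unfold alpha, jump; rewrite <- (logmean_mul_ln_jump _ _ (z2_pos _ HL) (z2_pos _ HR)).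
    field; split; lra. }
  rewrite Halpha.
  destruct HL as (HrL & HpL & _), HR as (HrR & HpR & _).
  unfold jump, specS, z2; rewrite !ln_div by assumption.
  field; lra.
Qed.

Lemma entV_jump_dot G sL sR F1 F2 F3 F4 : 1 < G -> admissible sL -> admissible sR ->
  avgW sL sR * F4 = alpha G sL sR * F1 + avguW sL sR * F2 + avgvW sL sR * F3 ->
  dot4 (jump4 (entV G sL) (entV G sR)) (F1, F2, F3, F4)
  = jump (ln (rho sL)) (ln (rho sR)) * F1
    + avgz2 sL sR * (jump (vx sL * lorentz sL) (vx sR * lorentz sR) * F2
                     + jump (vy sL * lorentz sL) (vy sR * lorentz sR) * F3
                     - jump (lorentz sL) (lorentz sR) * F4).
Proof.
  intros HG HL HR HF4.
  pose proof (entV1_jump _ _ _ HG HL HR) as HV1; unfold jump at 1 in HV1.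
  unfold dot4, jump4, entV; rewrite HV1.
  transitivity (jump (ln (rho sL)) (ln (rho sR)) * F1
    + avgz2 sL sR * (jump (vx sL * lorentz sL) (vx sR * lorentz sR) * F2
                     + jump (vy sL * lorentz sL) (vy sR * lorentz sR) * F3
                     - jump (lorentz sL) (lorentz sR) * F4)
    + jump (z2 sL) (z2 sR) * (alpha G sL sR * F1 + avguW sL sR * F2 + avgvW sL sR * F3
                              - avgW sL sR * F4)).
  - destruct HL as (_ & HpL & _), HR as (_ & HpR & _).
    unfold jump, avgz2, avguW, avgvW, avgW, avg, z2; field; lra.
  - rewrite HF4; ring.
Qed.

Lemma Ftilde_entropy_conservative G sL sR : 1 < G -> admissible sL -> admissible sR ->
  dot4 (jump4 (entV G sL) (entV G sR)) (Ftilde G sL sR) = jump (psix sL) (psix sR).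
Proof.
  intros HG HL HR.
  pose proof (avgW_pos _ _ HL HR); pose proof (Qden_pos _ _ HL HR).
  unfold Ftilde; cbv zeta.
  rewrite entV_jump_dot by (assumption || (field; lra)).
  rewrite logmean_ln_jump_mul, Qden_eq by (apply HL || apply HR || assumption).
  pose proof (lorentz_jump _ _ HL HR) as HWj.
  pose proof (lorentz_pos _ HL); pose proof (lorentz_pos _ HR).
  pose proof (z2_pos _ HL); pose proof (z2_pos _ HR).
  unfold jump, psix, avgz1, avgz2, avgz3, avgz4, avgW, avguW, avgvW, avg, z1, z3, z4 in *.
  replace (lorentz sR)
    with (lorentz sL + Lx sL sR * (vx sR - vx sL) + Ly sL sR * (vy sR - vy sL)) by lra.
  field; repeat split; lra.
Qed.

Definition mirror (s : state) : state := mkState (rho s) (vy s) (vx s) (pr s).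

Definition swap23 (a : vec4) : vec4 := let '(a1, a2, a3, a4) := a in (a1, a3, a2, a4).

Lemma dot4_swap23 a b : dot4 a (swap23 b) = dot4 (swap23 a) b.
Proof. destruct a as [[[? ?] ?] ?], b as [[[? ?] ?] ?]; simpl; ring. Qed.

Lemma jump4_swap23 a b : jump4 (swap23 a) (swap23 b) = swap23 (jump4 a b).
Proof. destruct a as [[[? ?] ?] ?], b as [[[? ?] ?] ?]; reflexivity. Qed.

Lemma admissible_mirror s : admissible s -> admissible (mirror s).
Proof. unfold admissible; simpl; lra. Qed.

Lemma sqrt_mirror s :
  sqrt (1 - vx (mirror s) ^ 2 - vy (mirror s) ^ 2) = sqrt (1 - vx s ^ 2 - vy s ^ 2).
Proof. simpl; f_equal; ring. Qed.

Lemma lorentz_mirror s : lorentz (mirror s) = lorentz s.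
Proof. unfold lorentz; rewrite sqrt_mirror; reflexivity. Qed.

Lemma Lx_mirror sL sR : Lx (mirror sL) (mirror sR) = Ly sL sR.
Proof. unfold Lx, Ly; rewrite !sqrt_mirror; reflexivity. Qed.

Lemma Ly_mirror sL sR : Ly (mirror sL) (mirror sR) = Lx sL sR.
Proof. unfold Lx, Ly; rewrite !sqrt_mirror; reflexivity. Qed.

Lemma Qden_mirror sL sR : Qden (mirror sL) (mirror sR) = Qden sL sR.
Proof.
  unfold Qden, avgz2, avgz3, avgz4, avgW, avguW, avgvW, z2, z3, z4.
  rewrite Lx_mirror, Ly_mirror, !lorentz_mirror; simpl; ring.
Qed.

Lemma Gtilde_mirror G sL sR : Gtilde G sL sR = swap23 (Ftilde G (mirror sL) (mirror sR)).
Proof.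
  unfold Gtilde, Ftilde, alpha, avgz1, avgz2, avgz3, avgz4, avgW, avguW, avgvW, z1, z2, z3, z4.
  rewrite Qden_mirror, Lx_mirror, Ly_mirror, !lorentz_mirror; simpl.
  f_equal; [f_equal; ring | ring].
Qed.

Lemma entV_mirror G s : entV G (mirror s) = swap23 (entV G s).
Proof. unfold entV; rewrite lorentz_mirror; reflexivity. Qed.

Lemma psiy_mirror s : psiy s = psix (mirror s).
Proof. unfold psix, psiy; rewrite lorentz_mirror; reflexivity. Qed.

Lemma physG_mirror G s : physG G s = swap23 (physF G (mirror s)).
Proof.
  unfold physG, physF, consD, consMx, consMy, enthalpy.
  rewrite lorentz_mirror; reflexivity.
Qed.

Lemma Gtilde_entropy_conservative G sL sR : 1 < G -> admissible sL -> admissible sR ->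
  dot4 (jump4 (entV G sL) (entV G sR)) (Gtilde G sL sR) = jump (psiy sL) (psiy sR).
Proof.
  intros HG HL HR.
  rewrite Gtilde_mirror, dot4_swap23, <- jump4_swap23, <- !entV_mirror, !psiy_mirror.
  apply Ftilde_entropy_conservative; auto using admissible_mirror.
Qed.

Lemma avg_diag a : avg a a = a.
Proof. unfold avg; field. Qed.

Lemma Lx_diag s : admissible s -> Lx s s = vx s * lorentz s ^ 3.
Proof.
  intros Hs; pose proof (lorentz_sqrt_pos _ Hs).
  unfold Lx, lorentz; field; lra.
Qed.

Lemma Ly_diag s : admissible s -> Ly s s = vy s * lorentz s ^ 3.
Proof.
  intros Hs; pose proof (lorentz_sqrt_pos _ Hs).
  unfold Ly, lorentz; field; lra.
Qed.

Lemma lorentz_sq_speed s : admissible s ->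
  lorentz s ^ 2 * (vx s ^ 2 + vy s ^ 2) = lorentz s ^ 2 - 1.
Proof.
  intros Hs; pose proof (lorentz_sqrt_pos _ Hs).
  assert (Hq : sqrt (1 - vx s ^ 2 - vy s ^ 2) ^ 2 = 1 - vx s ^ 2 - vy s ^ 2)
    by (apply pow2_sqrt; destruct Hs as (_ & _ & ?); lra).
  unfold lorentz.
  replace (vx s ^ 2 + vy s ^ 2) with (1 - sqrt (1 - vx s ^ 2 - vy s ^ 2) ^ 2) by lra.
  field; lra.
Qed.

Lemma closed_vec4_eq (F1 F2 F3 P1 P2 P3 P4 W a uW vW : R) :
  F1 = P1 -> F2 = P2 -> F3 = P3 -> / W * (a * P1 + uW * P2 + vW * P3) = P4 ->
  ((F1, F2, F3, / W * (a * F1 + uW * F2 + vW * F3)) : vec4) = (P1, P2, P3, P4).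
Proof. intros -> -> -> <-; reflexivity. Qed.

Lemma Ftilde_diag G s : 1 < G -> admissible s -> Ftilde G s s = physF G s.
Proof.
  intros HG Hs.
  pose proof (lorentz_pos _ Hs); pose proof (lorentz_sq_speed _ Hs) as Hspeed.
  pose proof Hs as (Hr & Hp & _).
  unfold Ftilde; cbv zeta.
  rewrite Qden_eq, Lx_diag, Ly_diag by assumption.
  unfold alpha, avgz1, avgz2, avgz3, avgz4, avgW, avguW, avgvW; rewrite !avg_diag, !logmean_diag.
  unfold physF, consD, consMx, consMy, enthalpy, z1, z2, z3, z4.
  set (W := lorentz s) in *; clearbody W.
  apply closed_vec4_eq; [field; lra .. |].
  (* At a single state alpha rho + p = rho h, and W^2 (u^2 + v^2) = W^2 - 1. *)
  transitivity (rho s * (1 + G * pr s / ((G - 1) * rho s)) * vx s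
                * (1 + W ^ 2 * (vx s ^ 2 + vy s ^ 2))).
  - field; lra.
  - rewrite Hspeed; ring.
Qed.

Lemma Gtilde_diag G s : 1 < G -> admissible s -> Gtilde G s s = physG G s.
Proof.
  intros HG Hs.
  rewrite Gtilde_mirror, physG_mirror, Ftilde_diag by auto using admissible_mirror.
  reflexivity.
Qed.

Theorem mainTheorem2 (G : R) (sL sR : state) :
  1 < G -> admissible sL -> admissible sR ->
  Qden sL sR = avgz2 sL sR * lorentz sL * lorentz sR /\
  0 < Qden sL sR /\
  dot4 (jump4 (entV G sL) (entV G sR)) (Ftilde G sL sR) = jump (psix sL) (psix sR) /\
  dot4 (jump4 (entV G sL) (entV G sR)) (Gtilde G sL sR) = jump (psiy sL) (psiy sR) /\
  (sL = sR -> Ftilde G sL sR = physF G sL /\ Gtilde G sL sR = physG G sL).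
Proof.
  intros HG HL HR.
  split; [exact (Qden_eq _ _ HL HR) |].
  split; [exact (Qden_pos _ _ HL HR) |].
  split; [exact (Ftilde_entropy_conservative _ _ _ HG HL HR) |].
  split; [exact (Gtilde_entropy_conservative _ _ _ HG HL HR) |].
  intros <-; split; [exact (Ftilde_diag _ _ HG HL) | exact (Gtilde_diag _ _ HG HL)].
Qed.
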